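(* Let $n\ge2$, $v\in V(\mathbb{T}_n^2)\setminus\{\mathbf 0\}$, $h(x)=\log(1+x)/\sqrt{\log(1+\|v\|_1)}$ for $x\ge0$, and define $\eta:V(\mathbb{T}_n^2)\to[0,\infty)$ by $\eta(w)=0$ if $\|w\|_1\le\sqrt{\|v\|_1}$, $\eta(w)=h(\|w\|_1)-h(\sqrt{\|v\|_1})$ if $\sqrt{\|v\|_1}\le\|w\|_1\le\|v\|_1$, and $\eta(w)=h(\|v\|_1)-h(\sqrt{\|v\|_1})$ if $\|w\|_1\ge\|v\|_1$. Let $\eta'(w,k)=\max\{\eta(w)-\eta(u):u\in V(\mathbb{T}_n^2),\ d(w,u)\le k\}$ with $d$ the graph distance in $\mathbb{T}_n^2$. Then there is an absolute constant $C>0$ (independent of $n$ and $v$) such that $$\sum_{w\in V(\mathbb{T}_n^2)}\sum_{k=0}^\infty2^{-k}\eta'(w,k+1)^2\le C,$$ and for every $\alpha>0$ and $0<\varepsilon\le 1/2$, $$L(\alpha\eta,\varepsilon)\ge\Big\lfloor(1+\sqrt{\|v\|_1})\Big(\exp\Big(\frac{\varepsilon\sqrt{\log(1+\|v\|_1)}}{2\alpha}\Big)-1\Big)\Big\rfloor-1.$$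
   Context: $\mathbb{T}_n^2$ is the discrete torus with vertex set $\{-n+1,\dots,n\}^2$, adjacent if equal in one coordinate and differing by $1$ mod $2n$ in the other; $\mathbf 0=(0,0)$, $\|(w_1,w_2)\|_1=|w_1|+|w_2|$. For $\tau:V\to[0,\infty)$ on a finite connected graph with distance $d$: $\tau'(w,k)=\max\{\tau(w)-\tau(u):d(w,u)\le k\}$ and $L(\tau,\varepsilon)=\sup\{k\ge0 \text{ integer}:\tau'(w,k)\le\varepsilon/2\ \forall w\}-1$. *)

From Stdlib Require Import Reals ZArith List.
Import ListNotations.
Open Scope R_scope.

(* Vertices of the torus T_n^2 : pairs of integers in {-n+1,...,n}^2. *)
Definition vtx := (Z * Z)%type.

Definition in_range (n : nat) (a : Z) : Prop :=
  (- Z.of_nat n + 1 <= a <= Z.of_nat n)%Z.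

Definition in_torus (n : nat) (w : vtx) : Prop :=
  in_range n (fst w) /\ in_range n (snd w).

Definition zrange (n : nat) : list Z :=
  map (fun i => (- Z.of_nat n + 1 + Z.of_nat i)%Z) (seq 0 (2 * n)).

Definition vertices (n : nat) : list vtx := list_prod (zrange n) (zrange n).

Definition zsucc (n : nat) (a : Z) : Z :=
  if Z.eqb a (Z.of_nat n) then (- Z.of_nat n + 1)%Z else (a + 1)%Z.
Definition zpred (n : nat) (a : Z) : Z :=
  if Z.eqb a (- Z.of_nat n + 1)%Z then Z.of_nat n else (a - 1)%Z.

Definition neighbours (n : nat) (w : vtx) : list vtx :=
  let (a, b) := w in
  [(zsucc n a, b); (zpred n a, b); (a, zsucc n b); (a, zpred n b)].

(* ball n k w : list of all vertices u with graph distance d(w,u) <= k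
   (possibly with repetitions). *)
Fixpoint ball (n : nat) (k : nat) (w : vtx) : list vtx :=
  match k with
  | O => [w]
  | S k' => ball n k' w ++ flat_map (neighbours n) (ball n k' w)
  end.

Definition norm1 (w : vtx) : R := IZR (Z.abs (fst w) + Z.abs (snd w)).

Definition sum_vertices (n : nat) (f : vtx -> R) : R :=
  fold_right Rplus 0 (map f (vertices n)).

(* tau'(w,k) = max { tau w - tau u : d(w,u) <= k } (w itself is in the ball,
   so the extra 0 in the fold does not change the maximum). *)
Definition tau' (n : nat) (tau : vtx -> R) (w : vtx) (k : nat) : R :=
  fold_right Rmax 0 (map (fun u => tau w - tau u) (ball n k w)).

Definition L_set (n : nat) (tau : vtx -> R) (eps : R) (k : nat) : Prop :=
  forall w, in_torus n w -> tau' n tau w k <= eps / 2.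

(* "L(tau,eps) >= b", where L(tau,eps) = sup (L_set) - 1 (possibly +infinity):
   every (real) upper bound U of L_set satisfies U - 1 >= b. *)
Definition L_ge (n : nat) (tau : vtx -> R) (eps : R) (b : R) : Prop :=
  forall U : R, (forall k : nat, L_set n tau eps k -> INR k <= U) -> U - 1 >= b.

Definition h (v : vtx) (x : R) : R := ln (1 + x) / sqrt (ln (1 + norm1 v)).

Definition eta (v : vtx) (w : vtx) : R :=
  if Rle_dec (norm1 w) (sqrt (norm1 v)) then 0
  else if Rle_dec (norm1 w) (norm1 v) then h v (norm1 w) - h v (sqrt (norm1 v))
  else h v (norm1 v) - h v (sqrt (norm1 v)).

Definition floorR (x : R) : R := IZR (Int_part x).

From Stdlib Require Import Reals ZArith List Lra Lia.
Import ListNotations.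
Open Scope R_scope.

(* Write m = |v|_1, s = sqrt m and c(t) = min (max t s) m.  Within graph distance k of w
   the l1 norm drops by at most k, and eta w = (log (1 + c |w|_1) - log (1 + s)) / sqrt (log (1 + m))
   is a nondecreasing function of the norm, so eta'(w, k) is at most
   (log (1 + c r) - log (1 + c (r - k))) / sqrt (log (1 + m)) with r = |w|_1.
   As c (r - k) >= s, this gain is at most log (1 + k / (1 + s)), which yields the bound on L.
   For the energy, the gain vanishes unless s < r < m + k and is then O(k^2 / (1 + r)), while
   1 / (1 + r)^2 is dominated by the second difference of psi(t) = - log (1 + s + min t (m + k + 2)).
   Summed over the torus these second differences telescope to at most log (1 + m) + k + 2, so
   sum_w eta'(w, k)^2 = O(k^5), which the weights 2^-k make summable. *)

Lemma ln_le x y : 0 < x -> x <= y -> ln x <= ln y.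
Proof.
  intros Hx Hxy; destruct (Req_dec x y) as [<-|Hne]; [lra|].
  left; apply ln_increasing; lra.
Qed.

Lemma ln_nonneg x : 1 <= x -> 0 <= ln x.
Proof. intros Hx; rewrite <- ln_1; apply ln_le; lra. Qed.

Lemma ln_sub_le x y : 0 < x -> 0 < y -> ln y - ln x <= (y - x) / x.
Proof.
  intros Hx Hy.
  assert (Hy_eq : y = x * (1 + (y - x) / x)) by (field; lra).
  assert (Hpos : 0 < 1 + (y - x) / x) by (rewrite Hy_eq in Hy; nra).
  rewrite Hy_eq at 1; rewrite ln_mult by lra.
  assert (ln (1 + (y - x) / x) <= (y - x) / x); [|lra].
  rewrite <- (ln_exp ((y - x) / x)) at 2; apply ln_le; [lra|apply exp_ineq1_le].
Qed.

Lemma sum_pow_le x N : 0 <= x < 1 -> sum_f_R0 (fun k => x ^ k) N <= / (1 - x).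
Proof.
  intros Hx; rewrite tech3 by lra.
  assert (0 <= x ^ S N) by (apply pow_le; lra).
  unfold Rdiv; rewrite <- (Rmult_1_l (/ (1 - x))) at 2.
  apply Rmult_le_compat_r; [left; apply Rinv_0_lt_compat|]; lra.
Qed.

Lemma Un_cv_const c : Un_cv (fun _ => c) c.
Proof. intros eps Heps; exists 0%nat; intros; unfold Rdist; rewrite Rminus_diag, Rabs_R0; lra. Qed.

Lemma sum_f_R0_telescope (f : nat -> R) N :
  sum_f_R0 (fun k => f k - f (S k)) N = f 0%nat - f (S N).
Proof. induction N as [|N IH]; simpl; [|rewrite IH]; ring. Qed.

Lemma sum_f_R0_second_difference (P : nat -> R) N :
  sum_f_R0 (fun i => sum_f_R0 (fun l => P (i + l)%nat - 2 * P (S (i + l)) + P (S (S (i + l)))) N) N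
  = P 0%nat - 2 * P (S N) + P (S N + S N)%nat.
Proof.
  transitivity (sum_f_R0 (fun i => (P i - P (S i)) - (P (i + S N)%nat - P (S (i + S N)))) N).
  - apply sum_eq; intros i _.
    rewrite (sum_eq _ (fun l => (P (i + l)%nat - P (S (i + l))) - (P (i + S l)%nat - P (S (i + S l))))).
    + rewrite (sum_f_R0_telescope (fun l => P (i + l)%nat - P (S (i + l)))).
      rewrite Nat.add_0_r, Nat.add_succ_r; reflexivity.
    + intros l _; rewrite Nat.add_succ_r; ring.
  - rewrite minus_sum, sum_f_R0_telescope.
    rewrite (sum_f_R0_telescope (fun i => P (i + S N)%nat)); simpl.
    replace (S (N + S N)) with (S N + S N)%nat by lia; ring.
Qed.

Lemma norm1_neighbour n w u : In u (neighbours n w) -> norm1 w <= norm1 u + 1.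
Proof.
  unfold norm1; rewrite <- plus_IZR; intros Hu; apply IZR_le.
  destruct w as [a b]; simpl in Hu.
  destruct Hu as [<-|[<-|[<-|[<-|[]]]]]; unfold zsucc, zpred; simpl;
    match goal with |- context [Z.eqb ?x ?y] => destruct (Z.eqb_spec x y) end; lia.
Qed.

Lemma norm1_ball n k w u : In u (ball n k w) -> norm1 w <= norm1 u + INR k.
Proof.
  revert u; induction k as [|k IH]; intros u Hu; cbn [ball] in Hu.
  - destruct Hu as [<-|[]]; simpl; lra.
  - rewrite S_INR; apply in_app_or in Hu as [Hu|Hu].
    + specialize (IH u Hu); lra.
    + apply in_flat_map in Hu as [x [Hx Hu]].
      specialize (IH x Hx); apply norm1_neighbour in Hu; lra.
Qed.

Lemma tau'_nonneg n tau w k : 0 <= tau' n tau w k.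
Proof.
  unfold tau'; induction (map _ _) as [|x l IH]; simpl; [lra|].
  eapply Rle_trans; [exact IH|apply Rmax_r].
Qed.

Lemma tau'_le n tau w k B : 0 <= B ->
  (forall u, In u (ball n k w) -> tau w - tau u <= B) -> tau' n tau w k <= B.
Proof.
  intros HB Hball; unfold tau'.
  induction (ball n k w) as [|u l IH]; simpl; [exact HB|].
  apply Rmax_lub; [apply Hball; left; reflexivity|].
  apply IH; intros x Hx; apply Hball; right; exact Hx.
Qed.

Lemma tau'_le_of_range n tau w k B : (forall u, 0 <= tau u <= B) -> tau' n tau w k <= B.
Proof.
  intros Htau; apply tau'_le; [specialize (Htau w); lra|].
  intros u _; pose proof (Htau w); pose proof (Htau u); lra.
Qed.

Lemma L_ge_floor n tau eps X : 0 <= X ->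
  (forall k, INR k <= X -> L_set n tau eps k) -> L_ge n tau eps (floorR X - 1).
Proof.
  intros HX HL U HU; unfold floorR.
  destruct (base_Int_part X) as [Hfl Hfl'].
  assert (Hnn : (-1 < Int_part X)%Z) by (apply lt_IZR; lra).
  assert (HK : INR (Z.to_nat (Int_part X)) = IZR (Int_part X))
    by (rewrite INR_IZR_INZ, Z2Nat.id; [reflexivity|lia]).
  assert (IZR (Int_part X) <= U); [|lra].
  rewrite <- HK; apply HU, HL; lra.
Qed.

Definition sum_list {A} (l : list A) (f : A -> R) : R := fold_right Rplus 0 (map f l).

Lemma sum_list_le {A} (l : list A) f g :
  (forall x, In x l -> f x <= g x) -> sum_list l f <= sum_list l g.
Proof.
  unfold sum_list; induction l as [|x l IH]; simpl; intros H; [lra|].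
  apply Rplus_le_compat; auto.
Qed.

Lemma sum_list_ext {A} (l : list A) f g :
  (forall x, f x = g x) -> sum_list l f = sum_list l g.
Proof. intros H; unfold sum_list; f_equal; apply map_ext, H. Qed.

Lemma sum_list_scal {A} (l : list A) c f : sum_list l (fun x => c * f x) = c * sum_list l f.
Proof. unfold sum_list; induction l as [|x l IH]; simpl; [|rewrite IH]; ring. Qed.

Lemma sum_list_app {A} (l1 l2 : list A) f : sum_list (l1 ++ l2) f = sum_list l1 f + sum_list l2 f.
Proof. unfold sum_list; induction l1 as [|x l IH]; simpl; [|rewrite IH]; ring. Qed.

Lemma sum_list_prod {A B} (l1 : list A) (l2 : list B) f :
  sum_list (list_prod l1 l2) f = sum_list l1 (fun a => sum_list l2 (fun b => f (a, b))).
Proof.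
  induction l1 as [|a l IH]; [reflexivity|].
  simpl; rewrite sum_list_app, IH; unfold sum_list at 1; rewrite map_map; reflexivity.
Qed.

Lemma sum_list_sum_f_R0 {A} (l : list A) (T : A -> nat -> R) N :
  sum_list l (fun x => sum_f_R0 (T x) N) = sum_f_R0 (fun k => sum_list l (fun x => T x k)) N.
Proof.
  unfold sum_list; induction l as [|x l IH]; simpl.
  - rewrite sum_cte; ring.
  - rewrite IH, <- sum_plus; reflexivity.
Qed.

Lemma sum_list_cv {A} (l : list A) (u : A -> nat -> R) (S : A -> R) :
  (forall x, Un_cv (u x) (S x)) -> Un_cv (fun N => sum_list l (fun x => u x N)) (sum_list l S).
Proof.
  intros H; unfold sum_list; induction l as [|x l IH]; simpl.
  - apply Un_cv_const.
  - apply CV_plus; auto.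
Qed.

Lemma zrange_S n : zrange (S n) = (- Z.of_nat n)%Z :: zrange n ++ [(Z.of_nat n + 1)%Z].
Proof.
  unfold zrange; replace (2 * S n)%nat with (S (S (2 * n))) by lia.
  rewrite seq_S; change (seq 0 (S (2 * n))) with (0%nat :: seq 1 (2 * n)).
  rewrite <- seq_shift, map_app; cbn [map app]; rewrite map_map.
  f_equal; [lia|]; f_equal; [apply map_ext; intros; lia|]; f_equal; lia.
Qed.

Lemma sum_zrange_abs_le (F : nat -> R) n : (forall i, 0 <= F i) ->
  sum_list (zrange n) (fun a => F (Z.abs_nat a)) <= 2 * sum_f_R0 F n.
Proof.
  intros HF.
  enough (H : sum_list (zrange n) (fun a => F (Z.abs_nat a)) + F n <= 2 * sum_f_R0 F n)
    by (specialize (HF n); lra).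
  induction n as [|n IH]; simpl.
  - specialize (HF 0%nat); unfold sum_list; simpl; lra.
  - rewrite zrange_S; change (sum_list (?a :: ?l) ?f) with (f a + sum_list l f).
    rewrite sum_list_app; unfold sum_list at 2; simpl.
    replace (Z.abs_nat (- Z.of_nat n)) with n by lia.
    replace (Z.abs_nat (Z.of_nat n + 1)) with (S n) by lia; lra.
Qed.

Lemma norm1_abs_nat w : norm1 w = INR (Z.abs_nat (fst w) + Z.abs_nat (snd w)).
Proof. unfold norm1; rewrite INR_IZR_INZ; f_equal; lia. Qed.

(* Each value of |a| occurs at most twice in {-n+1,...,n}, hence the factor 4. *)
Lemma sum_vertices_norm1_le (F : R -> R) n : (forall t : nat, 0 <= F (INR t)) ->
  sum_vertices n (fun w => F (norm1 w)) <=
  4 * sum_f_R0 (fun i => sum_f_R0 (fun l => F (INR (i + l))) n) n.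
Proof.
  intros HF.
  change (sum_vertices n ?f) with (sum_list (list_prod (zrange n) (zrange n)) f).
  rewrite sum_list_prod.
  eapply Rle_trans.
  - apply (sum_list_le _ _ (fun a => 2 * sum_f_R0 (fun l => F (INR (Z.abs_nat a + l))) n)).
    intros a _; rewrite (sum_list_ext _ _ (fun b => F (INR (Z.abs_nat a + Z.abs_nat b)))).
    + apply (sum_zrange_abs_le (fun l => F (INR (Z.abs_nat a + l)))); auto.
    + intros b; rewrite norm1_abs_nat; reflexivity.
  - rewrite sum_list_scal.
    assert (H := sum_zrange_abs_le (fun i => sum_f_R0 (fun l => F (INR (i + l))) n) n).
    assert (Hsum : forall i, 0 <= sum_f_R0 (fun l => F (INR (i + l))) n)
      by (intros; apply cond_pos_sum; auto).
    specialize (H Hsum); lra.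
Qed.

Definition second_diff (f : R -> R) (t : R) : R := f t - 2 * f (t + 1) + f (t + 2).

Definition capped_log (a M t : R) : R := - ln (a + Rmin t M).

Section CappedLog.
Variables a M : R.
Hypothesis a_pos : 0 < a.
Hypothesis M_nonneg : 0 <= M.

Lemma capped_log_antitone t1 t2 : 0 <= t1 <= t2 -> capped_log a M t2 <= capped_log a M t1.
Proof.
  intros Ht; unfold capped_log; apply Ropp_le_contravar, ln_le.
  - apply Rmin_case; lra.
  - apply Rplus_le_compat_l, Rle_min_compat_r; lra.
Qed.

Lemma capped_log_ge t : 0 <= t -> - ln (a + M) <= capped_log a M t.
Proof.
  intros Ht; unfold capped_log; apply Ropp_le_contravar, ln_le.
  - apply Rmin_case; lra.
  - pose proof (Rmin_r t M); lra.
Qed.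

Lemma second_diff_capped_log_nonneg t : 0 <= t -> 0 <= second_diff (capped_log a M) t.
Proof.
  intros Ht; unfold second_diff, capped_log.
  set (A := a + Rmin t M); set (B := a + Rmin (t + 1) M); set (C := a + Rmin (t + 2) M).
  assert (HA : 0 < A) by (unfold A; apply Rmin_case; lra).
  assert (HABC : A <= B <= C /\ (B = A + 1 \/ B = C) /\ C <= A + 2)
    by (unfold A, B, C, Rmin; repeat destruct Rle_dec; lra).
  assert (HAC : A * C <= B * B) by (destruct HABC as [? [[->| ->] ?]]; nra).
  apply ln_le in HAC; [|nra].
  rewrite !ln_mult in HAC by lra; lra.
Qed.

Lemma second_diff_capped_log_ge t : 0 <= t -> t + 2 <= M ->
  1 <= second_diff (capped_log a M) t * (a + t + 1) ^ 2.
Proof.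
  intros Ht HtM; unfold second_diff, capped_log.
  rewrite !Rmin_left by lra.
  set (A := a + t); replace (a + (t + 1)) with (A + 1) by (unfold A; ring).
  replace (a + (t + 2)) with (A + 2) by (unfold A; ring).
  assert (HA : 0 < A) by (unfold A; lra).
  assert (Hl := ln_sub_le ((A + 1) * (A + 1)) (A * (A + 2)) ltac:(nra) ltac:(nra)).
  rewrite !ln_mult in Hl by lra.
  replace ((A * (A + 2) - (A + 1) * (A + 1)) / ((A + 1) * (A + 1))) with (- / (A + 1) ^ 2) in Hl
    by (field; lra).
  assert (Hp : 0 < (A + 1) ^ 2) by nra.
  apply (Rmult_le_reg_r (/ (A + 1) ^ 2)); [apply Rinv_0_lt_compat; lra|].
  rewrite Rmult_assoc, Rinv_r, Rmult_1_l, Rmult_1_r by lra; lra.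
Qed.

Lemma double_sum_second_diff_capped_log_le N :
  sum_f_R0 (fun i => sum_f_R0 (fun l => second_diff (capped_log a M) (INR (i + l))) N) N
  <= ln (a + M) - ln a.
Proof.
  set (P := fun j => capped_log a M (INR j)).
  rewrite (sum_eq _ (fun i => sum_f_R0 (fun l => P (i + l)%nat - 2 * P (S (i + l)) + P (S (S (i + l)))) N)).
  - rewrite sum_f_R0_second_difference.
    assert (H0 : P 0%nat = - ln a)
      by (unfold P, capped_log; simpl; rewrite Rmin_left, Rplus_0_r by lra; reflexivity).
    assert (Hmono : P (S N + S N)%nat <= P (S N))
      by (apply capped_log_antitone; split; [apply pos_INR|apply le_INR; lia]).
    assert (Hlow := capped_log_ge (INR (S N)) (pos_INR _)); fold (P (S N)) in Hlow.
    lra.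
  - intros i _; apply sum_eq; intros l _.
    unfold P, second_diff; rewrite !S_INR; do 2 f_equal; ring.
Qed.

End CappedLog.

Section Profile.
Variables s m : R.
Hypothesis s_nonneg : 0 <= s.
Hypothesis s_le_m : s <= m.

Definition clamp (t : R) : R := Rmin (Rmax t s) m.

Definition log_gain (r k : R) : R := ln (1 + clamp r) - ln (1 + clamp (r - k)).

Lemma clamp_bounds t : s <= clamp t <= m.
Proof. unfold clamp, Rmin, Rmax; repeat destruct Rle_dec; lra. Qed.

Lemma clamp_le t1 t2 : t1 <= t2 -> clamp t1 <= clamp t2.
Proof. unfold clamp, Rmin, Rmax; repeat destruct Rle_dec; lra. Qed.

Lemma clamp_sub_le t1 t2 : t1 <= t2 -> clamp t2 - clamp t1 <= t2 - t1.
Proof. unfold clamp, Rmin, Rmax; repeat destruct Rle_dec; lra. Qed.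

Lemma clamp_ge t : t <= m -> t <= clamp t.
Proof. unfold clamp, Rmin, Rmax; repeat destruct Rle_dec; lra. Qed.

Lemma log_gain_nonneg r k : 0 <= k -> 0 <= log_gain r k.
Proof.
  intros Hk; unfold log_gain; pose proof (clamp_bounds (r - k)).
  enough (ln (1 + clamp (r - k)) <= ln (1 + clamp r)) by lra.
  apply ln_le; [lra|]; apply Rplus_le_compat_l, clamp_le; lra.
Qed.

Lemma log_gain_eq0 r k : 0 <= k -> r <= s \/ m <= r - k -> log_gain r k = 0.
Proof.
  intros Hk Hr; unfold log_gain.
  replace (clamp (r - k)) with (clamp r) by (unfold clamp, Rmin, Rmax; repeat destruct Rle_dec; lra).
  ring.
Qed.

Lemma log_gain_mul_le r k : 0 <= k -> log_gain r k * (1 + clamp (r - k)) <= k.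
Proof.
  intros Hk; unfold log_gain.
  pose proof (clamp_bounds r); pose proof (clamp_bounds (r - k)).
  assert (Hl := ln_sub_le (1 + clamp (r - k)) (1 + clamp r) ltac:(lra) ltac:(lra)).
  assert (Hlip := clamp_sub_le (r - k) r ltac:(lra)).
  apply (Rmult_le_compat_r (1 + clamp (r - k))) in Hl; [|lra].
  unfold Rdiv in Hl; rewrite Rmult_assoc, Rinv_l in Hl by lra; lra.
Qed.

Lemma log_gain_le_ln_step r k : 0 <= k -> log_gain r k <= ln (1 + k / (1 + s)).
Proof.
  intros Hk; unfold log_gain.
  pose proof (clamp_bounds (r - k)); pose proof (clamp_sub_le (r - k) r ltac:(lra)).
  assert (Hq : 0 <= k / (1 + s)) by (unfold Rdiv; apply Rmult_le_pos; [lra|left; apply Rinv_0_lt_compat; lra]).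
  assert (Hk' : k <= (1 + clamp (r - k)) * (k / (1 + s))).
  { replace ((1 + clamp (r - k)) * (k / (1 + s))) with (k * ((1 + clamp (r - k)) / (1 + s)))
      by (field; lra).
    assert (1 <= (1 + clamp (r - k)) / (1 + s)).
    { apply (Rmult_le_reg_r (1 + s)); [lra|].
      unfold Rdiv; rewrite Rmult_assoc, Rinv_l; lra. }
    nra. }
  assert (Hl : ln (1 + clamp r) <= ln ((1 + clamp (r - k)) * (1 + k / (1 + s))))
    by (apply ln_le; [pose proof (clamp_bounds r); lra|nra]).
  rewrite ln_mult in Hl by lra; lra.
Qed.

Lemma log_gain_sq_le r k : 1 <= k -> 0 <= r ->
  log_gain r k ^ 2 <= 16 * k ^ 4 * second_diff (capped_log (1 + s) (m + k + 2)) r.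
Proof.
  intros Hk Hr.
  assert (Hd0 := second_diff_capped_log_nonneg (1 + s) (m + k + 2) ltac:(lra) ltac:(lra) r Hr).
  assert (Hk4 : 0 <= k ^ 4) by (apply pow_le; lra).
  destruct (Rle_dec r s) as [Hrs|Hrs]; [|destruct (Rle_dec m (r - k)) as [Hrm|Hrm]].
  1,2: rewrite log_gain_eq0 by lra; simpl; nra.
  set (y := clamp (r - k)); set (e := log_gain r k).
  assert (He0 : 0 <= e) by (apply log_gain_nonneg; lra).
  assert (Hey : e * (1 + y) <= k) by (apply log_gain_mul_le; lra).
  assert (Hy : r - k <= y /\ s <= y)
    by (split; [apply clamp_ge; lra|apply clamp_bounds]).
  assert (Her : e * (1 + r) <= 2 * k ^ 2).
  { assert (1 + r <= (1 + y) * (1 + k)) by nra. nra. }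
  assert (Hd := second_diff_capped_log_ge (1 + s) (m + k + 2) ltac:(lra) r Hr ltac:(lra)).
  replace (1 + s + r + 1) with (2 + s + r) in Hd by ring.
  assert (Hsr : (2 + s + r) ^ 2 <= 4 * (1 + r) ^ 2) by nra.
  assert (Hpos : 0 < (1 + r) ^ 2) by nra.
  apply (Rmult_le_reg_r ((1 + r) ^ 2)); [exact Hpos|].
  replace (e ^ 2 * (1 + r) ^ 2) with ((e * (1 + r)) ^ 2) by ring.
  set (d := second_diff (capped_log (1 + s) (m + k + 2)) r) in *.
  assert (Hd4 : 1 <= 4 * d * (1 + r) ^ 2).
  { eapply Rle_trans; [exact Hd|].
    replace (4 * d * (1 + r) ^ 2) with (d * (4 * (1 + r) ^ 2)) by ring.
    apply Rmult_le_compat_l; assumption. }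
  apply Rle_trans with (4 * k ^ 4); [|nra].
  replace (4 * k ^ 4) with ((2 * k ^ 2) ^ 2) by ring.
  apply pow_incr; nra.
Qed.

End Profile.

Lemma norm1_ge1 v : v <> (0%Z, 0%Z) -> 1 <= norm1 v.
Proof.
  intros Hv; unfold norm1; apply IZR_le; destruct v as [a b]; simpl.
  destruct (Z.eq_dec a 0), (Z.eq_dec b 0); subst; [congruence|lia..].
Qed.

Section Eta.
Variable v : vtx.
Hypothesis norm1_v_ge1 : 1 <= norm1 v.

Local Notation m := (norm1 v).
Local Notation s := (sqrt (norm1 v)).
Local Notation Lg := (ln (1 + norm1 v)).

Lemma sqrt_norm1_bounds : 1 <= s <= m.
Proof.
  assert (H1 : 1 <= s) by (rewrite <- sqrt_1; apply sqrt_le_1_alt; lra).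
  split; [exact H1|]; pose proof (sqrt_sqrt m ltac:(lra)); nra.
Qed.

Let s_nonneg : 0 <= s := Rle_trans _ _ _ Rle_0_1 (proj1 sqrt_norm1_bounds).
Let s_le_m : s <= m := proj2 sqrt_norm1_bounds.

Lemma ln_norm1_ge_half : / 2 <= Lg.
Proof. pose proof ln_lt_2; assert (ln 2 <= Lg) by (apply ln_le; lra); lra. Qed.

Lemma sqrt_ln_norm1_pos : 0 < sqrt Lg.
Proof. apply sqrt_lt_R0; pose proof ln_norm1_ge_half; lra. Qed.

Lemma eta_eq w : eta v w = (ln (1 + clamp s m (norm1 w)) - ln (1 + s)) / sqrt Lg.
Proof.
  pose proof sqrt_norm1_bounds; unfold eta, h.
  destruct Rle_dec as [H1|H1]; [|destruct Rle_dec as [H2|H2]];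
    [replace (clamp s m (norm1 w)) with s|replace (clamp s m (norm1 w)) with (norm1 w)
    |replace (clamp s m (norm1 w)) with m];
    try (unfold clamp, Rmin, Rmax; repeat destruct Rle_dec; lra);
    unfold Rdiv; ring.
Qed.

Lemma eta_range w : 0 <= eta v w <= sqrt Lg.
Proof.
  pose proof sqrt_norm1_bounds; pose proof sqrt_ln_norm1_pos.
  pose proof (clamp_bounds s m s_le_m (norm1 w)) as Hc.
  rewrite eta_eq; split.
  - apply Rmult_le_pos; [|left; apply Rinv_0_lt_compat; lra].
    enough (ln (1 + s) <= ln (1 + clamp s m (norm1 w))) by lra.
    apply ln_le; lra.
  - apply (Rmult_le_reg_r (sqrt Lg)); [lra|].
    unfold Rdiv; rewrite Rmult_assoc, Rinv_l, sqrt_sqrt by (pose proof ln_norm1_ge_half; lra).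
    assert (ln (1 + clamp s m (norm1 w)) <= Lg) by (apply ln_le; lra).
    assert (0 <= ln (1 + s)) by (apply ln_nonneg; lra).
    lra.
Qed.

Lemma eta_sub_le n k w u : In u (ball n k w) ->
  eta v w - eta v u <= log_gain s m (norm1 w) (INR k) / sqrt Lg.
Proof.
  intros Hu; apply norm1_ball in Hu.
  pose proof sqrt_norm1_bounds; pose proof sqrt_ln_norm1_pos.
  rewrite !eta_eq; unfold log_gain, Rdiv; rewrite <- Rmult_minus_distr_r.
  apply Rmult_le_compat_r; [left; apply Rinv_0_lt_compat; lra|].
  pose proof (clamp_bounds s m s_le_m (norm1 w - INR k)).
  assert (ln (1 + clamp s m (norm1 w - INR k)) <= ln (1 + clamp s m (norm1 u)))
    by (apply ln_le; [lra|apply Rplus_le_compat_l, clamp_le; [exact s_le_m|lra]]).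
  lra.
Qed.

Lemma tau'_eta_le n k w : tau' n (eta v) w k <= log_gain s m (norm1 w) (INR k) / sqrt Lg.
Proof.
  pose proof sqrt_norm1_bounds; pose proof sqrt_ln_norm1_pos.
  apply tau'_le; [|apply eta_sub_le].
  apply Rmult_le_pos; [apply log_gain_nonneg; [exact s_nonneg|exact s_le_m|apply pos_INR]|left; apply Rinv_0_lt_compat; lra].
Qed.

Lemma tau'_eta_sq_le n k w : 1 <= INR k ->
  tau' n (eta v) w k ^ 2 <=
  16 * INR k ^ 4 / Lg * second_diff (capped_log (1 + s) (m + INR k + 2)) (norm1 w).
Proof.
  intros Hk; pose proof sqrt_ln_norm1_pos as Hsq.
  assert (HLg : sqrt Lg * sqrt Lg = Lg) by (apply sqrt_sqrt; pose proof ln_norm1_ge_half; lra).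
  assert (Hw : 0 <= norm1 w) by (rewrite norm1_abs_nat; apply pos_INR).
  assert (Hle := tau'_eta_le n k w).
  assert (Hsqr : tau' n (eta v) w k ^ 2 <= (log_gain s m (norm1 w) (INR k) / sqrt Lg) ^ 2)
    by (apply pow_incr; split; [apply tau'_nonneg|exact Hle]).
  eapply Rle_trans; [exact Hsqr|].
  replace ((log_gain s m (norm1 w) (INR k) / sqrt Lg) ^ 2)
    with (log_gain s m (norm1 w) (INR k) ^ 2 / (sqrt Lg * sqrt Lg)) by (field; lra).
  rewrite HLg.
  replace (16 * INR k ^ 4 / Lg * second_diff (capped_log (1 + s) (m + INR k + 2)) (norm1 w))
    with (16 * INR k ^ 4 * second_diff (capped_log (1 + s) (m + INR k + 2)) (norm1 w) / Lg)
    by (field; pose proof ln_norm1_ge_half; lra).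
  unfold Rdiv; apply Rmult_le_compat_r; [left; apply Rinv_0_lt_compat; pose proof ln_norm1_ge_half; lra|].
  apply log_gain_sq_le; [exact s_nonneg|exact s_le_m|exact Hk|exact Hw].
Qed.

Lemma sum_vertices_tau'_eta_sq_le n k : (1 <= k)%nat ->
  sum_vertices n (fun w => tau' n (eta v) w k ^ 2) <= 448 * INR k ^ 5.
Proof.
  intros Hk1; assert (Hk : 1 <= INR k) by (apply (le_INR 1); exact Hk1).
  pose proof ln_norm1_ge_half as HLg.
  set (K := INR k) in *; set (d := second_diff (capped_log (1 + s) (m + K + 2))).
  set (c := 16 * K ^ 4 / Lg).
  assert (Hc : 0 <= c)
    by (unfold c, Rdiv; apply Rmult_le_pos; [nra|left; apply Rinv_0_lt_compat; lra]).
  assert (Hd : forall t : nat, 0 <= d (INR t))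
    by (intros t; apply second_diff_capped_log_nonneg; [lra|lra|apply pos_INR]).
  assert (Hpointwise : sum_vertices n (fun w => tau' n (eta v) w k ^ 2)
                       <= c * sum_vertices n (fun w => d (norm1 w))).
  { change (sum_vertices n ?f) with (sum_list (vertices n) f).
    rewrite <- sum_list_scal; apply sum_list_le; intros w _; apply tau'_eta_sq_le, Hk. }
  assert (Htele : sum_vertices n (fun w => d (norm1 w))
                  <= 4 * (ln (1 + s + (m + K + 2)) - ln (1 + s))).
  { eapply Rle_trans; [apply sum_vertices_norm1_le, Hd|].
    apply Rmult_le_compat_l; [lra|apply double_sum_second_diff_capped_log_le; lra]. }
  assert (Hln : ln (1 + s + (m + K + 2)) <= Lg + (K + 2)).
  { assert (ln (1 + s + (m + K + 2)) <= ln ((1 + m) * (3 + K))) by (apply ln_le; nra).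
    rewrite ln_mult in H by lra.
    pose proof (ln_sub_le 1 (3 + K) ltac:(lra) ltac:(lra)); rewrite ln_1 in *; lra. }
  assert (Hs0 : 0 <= ln (1 + s)) by (apply ln_nonneg; lra).
  assert (Hratio : (K + 2) / Lg <= 2 * (K + 2)).
  { apply (Rmult_le_reg_r Lg); [lra|].
    unfold Rdiv; rewrite Rmult_assoc, Rinv_l by lra; nra. }
  assert (Hc4 : c * (4 * (Lg + (K + 2))) = 64 * K ^ 4 + 64 * K ^ 4 * ((K + 2) / Lg))
    by (unfold c; field; lra).
  assert (HK4 : 0 <= K ^ 4) by (apply pow_le; lra).
  assert (c * sum_vertices n (fun w => d (norm1 w)) <= c * (4 * (Lg + (K + 2))))
    by (apply Rmult_le_compat_l; lra).
  assert (64 * K ^ 4 * ((K + 2) / Lg) <= 64 * K ^ 4 * (2 * (K + 2)))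
    by (apply Rmult_le_compat_l; lra).
  replace (448 * K ^ 5) with (64 * K ^ 4 * (7 * K)) by ring.
  nra.
Qed.

Lemma tau'_scaled_eta_le n k alpha eps w : 0 < alpha -> 0 < eps ->
  INR k <= (1 + s) * (exp (eps * sqrt Lg / (2 * alpha)) - 1) ->
  tau' n (fun u => alpha * eta v u) w k <= eps / 2.
Proof.
  intros Ha He Hk; pose proof sqrt_ln_norm1_pos as Hsq.
  set (X := eps * sqrt Lg / (2 * alpha)) in *.
  assert (Hstep : ln (1 + INR k / (1 + s)) <= X).
  { rewrite <- (ln_exp X); apply ln_le.
    - pose proof (pos_INR k); apply Rplus_lt_le_0_compat; [lra|].
      unfold Rdiv; apply Rmult_le_pos; [lra|left; apply Rinv_0_lt_compat; lra].
    - apply (Rmult_le_reg_r (1 + s)); [lra|].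
      rewrite Rmult_plus_distr_r; unfold Rdiv; rewrite Rmult_assoc, Rinv_l by lra; lra. }
  assert (Hgain := log_gain_le_ln_step s m s_nonneg s_le_m (norm1 w) (INR k) (pos_INR k)).
  apply tau'_le; [lra|]; intros u Hu.
  assert (Hsub := eta_sub_le n k w u Hu).
  assert (Hdiv : log_gain s m (norm1 w) (INR k) / sqrt Lg <= X / sqrt Lg)
    by (apply Rmult_le_compat_r; [left; apply Rinv_0_lt_compat|]; lra).
  assert (HX : alpha * (X / sqrt Lg) = eps / 2) by (unfold X; field; lra).
  rewrite <- Rmult_minus_distr_l, <- HX; apply Rmult_le_compat_l; lra.
Qed.

Lemma has_ub_eta_energy n w :
  has_ub (sum_f_R0 (fun k => (/ 2) ^ k * tau' n (eta v) w (S k) ^ 2)).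
Proof.
  exists (2 * Lg); intros x [N ->].
  assert (Hterm : forall k, (/ 2) ^ k * tau' n (eta v) w (S k) ^ 2 <= (/ 2) ^ k * Lg).
  { intros k; apply Rmult_le_compat_l; [apply pow_le; lra|].
    rewrite <- (sqrt_sqrt Lg) by (pose proof ln_norm1_ge_half; lra); simpl; rewrite Rmult_1_r.
    assert (Ht := tau'_le_of_range n (eta v) w (S k) (sqrt Lg) eta_range).
    pose proof (tau'_nonneg n (eta v) w (S k)); apply Rmult_le_compat; lra. }
  eapply Rle_trans; [apply sum_Rle; intros k _; apply Hterm|].
  rewrite <- scal_sum, (Rmult_comm 2); apply Rmult_le_compat_l; [pose proof ln_norm1_ge_half; lra|].
  eapply Rle_trans; [apply sum_pow_le; lra|]; lra.
Qed.

End Eta.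

Lemma sum_list_series_le {A} (l : list A) (T : A -> nat -> R) (b : nat -> R) C :
  (forall x k, 0 <= T x k) -> (forall x, has_ub (sum_f_R0 (T x))) ->
  (forall k, sum_list l (fun x => T x k) <= b k) -> (forall N, sum_f_R0 b N <= C) ->
  exists S : A -> R, (forall x, infinite_sum (T x) (S x)) /\ sum_list l S <= C.
Proof.
  intros HT Hub Hb HC.
  assert (conv : forall x, {S | Un_cv (sum_f_R0 (T x)) S}).
  { intros x; apply growing_cv; [|apply Hub].
    intros N; simpl; specialize (HT x (S N)); lra. }
  exists (fun x => proj1_sig (conv x)); split; [intros x; exact (proj2_sig (conv x))|].
  apply (Rle_cv_lim (Un := fun N => sum_list l (fun x => sum_f_R0 (T x) N)) (Vn := fun _ => C)).
  - intros N; rewrite sum_list_sum_f_R0.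
    eapply Rle_trans; [apply sum_Rle; intros k _; apply Hb|apply HC].
  - apply sum_list_cv; intros x; exact (proj2_sig (conv x)).
  - apply Un_cv_const.
Qed.

(* From Bernoulli's inequality k + 1 <= 8 (9/8)^k, and (9/8)^5 / 2 < 10/11. *)
Lemma sum_half_pow_poly5_le N :
  sum_f_R0 (fun k => (/ 2) ^ k * INR (S k) ^ 5) N <= 8 ^ 5 * 11.
Proof.
  set (q := / 2 * (9 / 8) ^ 5).
  assert (Hq : 0 <= q < 1) by (unfold q; simpl; lra).
  assert (Hterm : forall k, (/ 2) ^ k * INR (S k) ^ 5 <= 8 ^ 5 * q ^ k).
  { intros k.
    assert (Hb : INR (S k) <= 8 * (9 / 8) ^ k)
      by (pose proof (poly k (1 / 8) ltac:(lra)); rewrite S_INR;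
          replace (1 + 1 / 8) with (9 / 8) in * by field; lra).
    assert (H5 : INR (S k) ^ 5 <= (8 * (9 / 8) ^ k) ^ 5) by (apply pow_incr; split; [apply pos_INR|exact Hb]).
    unfold q; rewrite Rpow_mult_distr, <- pow_mult, Nat.mul_comm, pow_mult.
    rewrite Rpow_mult_distr in H5.
    assert (0 <= (/ 2) ^ k) by (apply pow_le; lra).
    replace (8 ^ 5 * ((/ 2) ^ k * ((9 / 8) ^ k) ^ 5)) with ((/ 2) ^ k * (8 ^ 5 * ((9 / 8) ^ k) ^ 5)) by ring.
    apply Rmult_le_compat_l; assumption. }
  eapply Rle_trans; [apply sum_Rle; intros k _; apply Hterm|].
  rewrite (sum_eq _ (fun k => q ^ k * 8 ^ 5)) by (intros; ring).
  rewrite <- scal_sum; apply Rmult_le_compat_l; [lra|].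
  eapply Rle_trans; [apply sum_pow_le, Hq|].
  apply (Rmult_le_reg_r (1 - q)); [lra|]; rewrite Rinv_l by lra; unfold q; simpl; lra.
Qed.

Lemma eta_energy_le n v : v <> (0%Z, 0%Z) ->
  exists energy : vtx -> R,
    (forall w, infinite_sum (fun k => (/ 2) ^ k * tau' n (eta v) w (S k) ^ 2) (energy w)) /\
    sum_vertices n energy <= 448 * (8 ^ 5 * 11).
Proof.
  intros Hv; pose proof (norm1_ge1 v Hv) as Hm.
  apply (sum_list_series_le _ _ (fun k => 448 * ((/ 2) ^ k * INR (S k) ^ 5))).
  - intros w k; apply Rmult_le_pos; [apply pow_le; lra|apply pow2_ge_0].
  - intros w; apply has_ub_eta_energy, Hm.
  - intros k; rewrite sum_list_scal.
    assert (H := sum_vertices_tau'_eta_sq_le v Hm n (S k) ltac:(lia)).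
    assert (0 <= (/ 2) ^ k) by (apply pow_le; lra).
    replace (448 * ((/ 2) ^ k * INR (S k) ^ 5)) with ((/ 2) ^ k * (448 * INR (S k) ^ 5)) by ring.
    apply Rmult_le_compat_l; assumption.
  - intros N; rewrite (sum_eq _ (fun k => (/ 2) ^ k * INR (S k) ^ 5 * 448)) by (intros; ring).
    rewrite <- scal_sum; apply Rmult_le_compat_l; [lra|apply sum_half_pow_poly5_le].
Qed.

Lemma L_ge_scaled_eta n v alpha eps : v <> (0%Z, 0%Z) -> 0 < alpha -> 0 < eps ->
  L_ge n (fun w => alpha * eta v w) eps
    (floorR ((1 + sqrt (norm1 v)) * (exp (eps * sqrt (ln (1 + norm1 v)) / (2 * alpha)) - 1)) - 1).
Proof.
  intros Hv Ha He; pose proof (norm1_ge1 v Hv) as Hm.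
  apply L_ge_floor.
  - apply Rmult_le_pos; [pose proof (sqrt_pos (norm1 v)); lra|].
    set (X := eps * sqrt (ln (1 + norm1 v)) / (2 * alpha)).
    assert (0 <= X).
    { unfold X, Rdiv; apply Rmult_le_pos; [apply Rmult_le_pos; [lra|apply sqrt_pos]|].
      left; apply Rinv_0_lt_compat; lra. }
    pose proof (exp_ineq1_le X); lra.
  - intros k Hk w _; apply tau'_scaled_eta_le; assumption.
Qed.


Theorem lemma4p5 :
  (exists C : R, C > 0 /\
     forall (n : nat) (v : vtx), (2 <= n)%nat -> in_torus n v -> v <> (0%Z, 0%Z) ->
       exists S : vtx -> R,
         (forall w, in_torus n w ->
            infinite_sum (fun k => (/ 2) ^ k * (tau' n (eta v) w (Datatypes.S k)) ^ 2) (S w)) /\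
         sum_vertices n S <= C)
  /\
  (forall (n : nat) (v : vtx), (2 <= n)%nat -> in_torus n v -> v <> (0%Z, 0%Z) ->
     forall alpha eps : R, alpha > 0 -> 0 < eps <= / 2 ->
       L_ge n (fun w => alpha * eta v w) eps
         (floorR ((1 + sqrt (norm1 v)) *
                  (exp (eps * sqrt (ln (1 + norm1 v)) / (2 * alpha)) - 1)) - 1)).
Proof.
  split.
  - exists (448 * (8 ^ 5 * 11)); split; [lra|].
    intros n v _ _ Hv.
    destruct (eta_energy_le n v Hv) as [energy [Hcv Hsum]].
    exists energy; split; [intros w _; apply Hcv|exact Hsum].
  - intros n v _ _ Hv alpha eps Ha He.
    apply L_ge_scaled_eta; [exact Hv|exact Ha|apply He].
Qed.
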